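(* Consider the composite linear model described in the context, with squared ($\ell_2$) loss, and let $\mathcal{S}=\{(\mathbf{x}_i,y_i)\}_{i=1}^m$ be a dataset generated i.i.d. from it. Let $\mathcal{M}=[K]$ and $\mathcal{N}=[K-1]$, and let $\hat{\mathbf{A}}_{\mathcal{M}}$, $\hat{\mathbf{A}}_{\mathcal{N}}$ denote the projection matrices estimated (by empirical risk minimization) using the $\mathcal{M}$ modalities (over $\mathcal{G}_{\mathcal{M}}=\mathcal{G}$) and the $\mathcal{N}$ modalities (over $\mathcal{G}_{\mathcal{N}}$), respectively. Assume that $\hat{\mathbf{A}}_{\mathcal{M}}$ and $\mathbf{A}^\star$ have orthonormal columns. If $n=d$, then for a sufficiently large constant $C_b$, $$\gamma_{\mathcal{S}}(\mathcal{M},\mathcal{N}):=\eta(\hat{\mathbf{A}}_{\mathcal{M}})-\eta(\hat{\mathbf{A}}_{\mathcal{N}})\le 0.$$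
   Context: Data: $\mathbf{x}=(\mathbf{x}^{(1)},\dots,\mathbf{x}^{(K)})\in\mathbb{R}^d$ with $\mathbf{x}^{(k)}\in\mathbb{R}^{d_k}$ the feature vector of the $k$-th modality and $\sum_{k=1}^K d_k=d$; the distribution $\mathbb{P}_{\mathbf{x}}$ has a positive definite covariance matrix $\Sigma$. Labels are generated by $y=(\boldsymbol\beta^\star)^\top(\mathbf{A}^\star)^\top\mathbf{x}+\epsilon$, where $\epsilon$ is a random variable independent of $\mathbf{x}$ with zero mean and bounded second moment, $\mathbf{A}^\star\in\mathbb{R}^{d\times n}$, $\boldsymbol\beta^\star\in\mathbb{R}^n$ (with $\|\boldsymbol\beta^\star\|\le C_b$). Function classes: $\mathcal{G}=\{\mathbf{x}\mapsto\mathbf{A}^\top\mathbf{x}:\mathbf{A}\in\mathbb{R}^{d\times n}\}$, $\mathcal{H}=\{\mathbf{z}\mapsto\boldsymbol\beta^\top\mathbf{z}:\boldsymbol\beta\in\mathbb{R}^n,\|\boldsymbol\beta\|\le C_b\}$. For $\mathcal{M}=[K]$, $\mathcal{G}_{\mathcal{M}}=\mathcal{G}$; for $\mathcal{N}=[K-1]$, $\mathcal{G}_{\mathcal{N}}=\{\mathbf{x}\mapsto\begin{bmatrix}\mathbf{A}_{1:s}\\ \mathbf{0}\end{bmatrix}^\top\mathbf{x} : \mathbf{A}\in\mathbb{R}^{d\times n}\text{ with orthonormal columns}\}$, where $s=\sum_{k=1}^{K-1}d_k$, $\mathbf{A}_{1:s}$ denotes the first $s$ rows of $\mathbf{A}$,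 and $\mathbf{0}$ is the $d_K\times n$ zero block (so the last modality is ignored). The latent representation quality of a linear representation $\mathbf{x}\mapsto\mathbf{A}^\top\mathbf{x}$ under squared loss is $\eta(\mathbf{A})=\inf_{h\in\mathcal{H}}[r(h\circ g)-r(h^\star\circ g^\star)]=\inf_{\|\boldsymbol\beta\|\le C_b}\mathbb{E}_{\mathbf{x}}\big[|\boldsymbol\beta^\top\mathbf{A}^\top\mathbf{x}-(\boldsymbol\beta^\star)^\top(\mathbf{A}^\star)^\top\mathbf{x}|^2\big]$, where $r$ is the population squared-loss risk and $g^\star(\mathbf{x})=(\mathbf{A}^\star)^\top\mathbf{x}$, $h^\star(\mathbf{z})=(\boldsymbol\beta^\star)^\top\mathbf{z}$. *)

From HB Require Import structures.
From mathcomp Require Import all_boot all_order all_algebra.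
From mathcomp Require Import all_classical all_reals all_analysis.
Set Implicit Arguments. Unset Strict Implicit. Unset Printing Implicit Defensive.
Import Order.TTheory GRing.Theory Num.Theory.
Local Open Scope ring_scope.

Definition vnorm {R : realType} {n : nat} (b : 'cV[R]_n) : R :=
  Num.sqrt (\sum_(i < n) b i 0 ^+ 2).

Definition orthonormal_cols {R : realType} {d n : nat} (A : 'M[R]_(d, n)) : Prop :=
  A^T *m A = 1%:M.

Definition lin_pred {R : realType} {d n : nat} (A : 'M[R]_(d, n)) (b : 'cV[R]_n)
  (x : 'cV[R]_d) : R := (b^T *m A^T *m x) 0 0.

Definition maskN {R : realType} {d n : nat} (s : nat) (A : 'M[R]_(d, n)) : 'M[R]_(d, n) :=
  \matrix_(i, j) (if (i < s)%N then A i j else 0).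

(* membership in G_N (for s = d_1 + ... + d_{K-1}) *)
Definition in_GN {R : realType} {d n : nat} (s : nat) (A : 'M[R]_(d, n)) : Prop :=
  exists A0 : 'M[R]_(d, n), orthonormal_cols A0 /\ A = maskN s A0.

Definition emp_risk {R : realType} {d n m : nat} (xs : 'I_m -> 'cV[R]_d) (ys : 'I_m -> R)
  (A : 'M[R]_(d, n)) (b : 'cV[R]_n) : R :=
  \sum_(i < m) (ys i - lin_pred A b (xs i)) ^+ 2.

(* A is (the representation part of) an empirical risk minimizer over
   {g in G'} x {h : ||beta|| <= Cb}, where G' is given by the predicate inG *)
Definition is_ERM {R : realType} {d n m : nat} (inG : 'M[R]_(d, n) -> Prop) (Cb : R)
  (xs : 'I_m -> 'cV[R]_d) (ys : 'I_m -> R) (Ahat : 'M[R]_(d, n)) : Prop :=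
  inG Ahat /\ exists bhat : 'cV[R]_n, vnorm bhat <= Cb /\
    forall (A : 'M[R]_(d, n)) (b : 'cV[R]_n), inG A -> vnorm b <= Cb ->
      emp_risk xs ys Ahat bhat <= emp_risk xs ys A b.

Definition rv_coord {dT} {T : measurableType dT} {R : realType} {d : nat}
  (X : T -> 'cV[R]_d) (k : 'I_d) : T -> R := fun t => X t k 0.

Definition cov_mx {dT} {T : measurableType dT} {R : realType} {d : nat}
  (P : probability T R) (X : T -> 'cV[R]_d) : 'M[R]_d :=
  \matrix_(i, j) fine (covariance P (rv_coord X i) (rv_coord X j)).

Definition posdef {R : realType} {d : nat} (S : 'M[R]_d) : Prop :=
  forall v : 'cV[R]_d, v != 0 -> 0 < (v^T *m S *m v) 0 0.

Definition rep_quality {dT} {T : measurableType dT} {R : realType} {d n : nat}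
  (P : probability T R) (X : T -> 'cV[R]_d) (Cb : R)
  (Astar : 'M[R]_(d, n)) (bstar : 'cV[R]_n) (A : 'M[R]_(d, n)) : \bar R :=
  ereal_inf [set ('E_P[fun t => ((lin_pred A b (X t) - lin_pred Astar bstar (X t)) ^+ 2)%R])%E
            | b in [set b : 'cV[R]_n | vnorm b <= Cb]].

From HB Require Import structures.
From mathcomp Require Import all_boot all_order all_algebra.
From mathcomp Require Import all_classical all_reals all_analysis.
Import Order.TTheory GRing.Theory Num.Theory.
Local Open Scope ring_scope.

(* When n = d, an orthonormal AhatM is an orthogonal matrix.  The coefficient
   vector AhatM^T A* beta* then reproduces the true predictor exactly and has
   the same norm as beta*, so eta(AhatM) = 0, while eta is always nonnegative.
   Hence any C0 works. *)

Lemma sum_sqr_cV_trmx (R : realType) (n : nat) (v : 'cV[R]_n) :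
  \sum_(i < n) v i 0 ^+ 2 = (v^T *m v) 0 0.
Proof. by rewrite mxE; apply: eq_bigr => i _; rewrite !mxE expr2. Qed.

Lemma vnorm_isometry (R : realType) (p n : nat) (Q : 'M[R]_(p, n))
  (v : 'cV[R]_n) :
  orthonormal_cols Q -> vnorm (Q *m v) = vnorm v.
Proof.
move=> hQ; rewrite /vnorm !sum_sqr_cV_trmx; congr (Num.sqrt (_ 0 0)).
by rewrite trmx_mul -mulmxA (mulmxA Q^T) hQ mul1mx.
Qed.

Lemma lin_predE (R : realType) (d n : nat) (A : 'M[R]_(d, n))
  (b : 'cV[R]_n) (x : 'cV[R]_d) :
  lin_pred A b x = ((A *m b)^T *m x) 0 0.
Proof. by rewrite /lin_pred trmx_mul. Qed.

Section RepQuality.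
Variables (dT : measure_display) (T : measurableType dT) (R : realType).
Variables (P : probability T R) (d n : nat) (X : T -> 'cV[R]_d) (Cb : R).
Variables (Astar : 'M[R]_(d, n)) (bstar : 'cV[R]_n).

Lemma rep_quality_ge0 (A : 'M[R]_(d, n)) :
  (0 <= rep_quality P X Cb Astar bstar A)%E.
Proof.
apply/ereal_infP => _ [b _ <-].
by apply: expectation_ge0 => t; exact: sqr_ge0.
Qed.

Lemma rep_quality_eq0 (A : 'M[R]_(d, n)) (b : 'cV[R]_n) :
  vnorm b <= Cb -> A *m b = Astar *m bstar ->
  rep_quality P X Cb Astar bstar A = 0%E.
Proof.
move=> hb hAb; apply/eqP; rewrite eq_le rep_quality_ge0 andbT.
apply: ge_ereal_inf; exists 0%E => //; exists b => //=.
under eq_fun do rewrite !lin_predE hAb subrr expr0n.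
exact: expectation_cst.
Qed.

Lemma rep_quality_orthonormal_rows (A : 'M[R]_(d, n)) :
  orthonormal_cols Astar -> A *m A^T = 1%:M -> vnorm bstar <= Cb ->
  rep_quality P X Cb Astar bstar A = 0%E.
Proof.
move=> hAstar hArows hbstar.
apply: (@rep_quality_eq0 _ (A^T *m (Astar *m bstar))).
  have hAT : orthonormal_cols A^T by rewrite /orthonormal_cols trmxK.
  by rewrite vnorm_isometry // vnorm_isometry.
by rewrite mulmxA hArows mul1mx.
Qed.

End RepQuality.

Theorem proposition1 (R : realType) (dT : measure_display) (T : measurableType dT)
  (P : probability T R) (K : nat) (dk : 'I_K -> nat) (d n : nat)
  (hK : (1 <= K)%N) (hd : d = (\sum_(k < K) dk k)%N)
  (X : T -> 'cV[R]_d)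
  (hX2 : forall k : 'I_d, rv_coord X k \in Lfun P 2%:E)
  (hSigma : posdef (cov_mx P X))
  (Astar : 'M[R]_(d, n)) (hAstar : orthonormal_cols Astar)
  (hnd : n = d) :
  exists C0 : R, forall Cb : R, C0 <= Cb ->
  forall (bstar : 'cV[R]_n), vnorm bstar <= Cb ->
  forall (m : nat) (xs : 'I_m -> 'cV[R]_d) (ys : 'I_m -> R)
         (AhatM AhatN : 'M[R]_(d, n)),
    is_ERM (fun _ => True) Cb xs ys AhatM ->
    is_ERM (in_GN (\sum_(k < K | (k < K.-1)%N) dk k)%N) Cb xs ys AhatN ->
    orthonormal_cols AhatM ->
    (rep_quality P X Cb Astar bstar AhatM - rep_quality P X Cb Astar bstar AhatN <= 0)%E.
Proof.
exists 0 => Cb _ bstar hbstar m xs ys AM AN _ _ hAM.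
subst n.
have hAMrows : AM *m AM^T = 1%:M by exact: mulmx1C.
rewrite (@rep_quality_orthonormal_rows _ _ _ P _ _ X _ _ _ _ hAstar hAMrows hbstar).
by rewrite sub0e oppe_le0 rep_quality_ge0.
Qed.
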